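(* Let $n\ge2$, let $\mathbf{A}=(a_{ij})$ be an $n\times n$ matrix over a field, let $t=\lfloor n/2\rfloor+1$, and assume $a_{it}\ne0$ for all $i\in[n]$. Let $\mathbf{A}|_t$ be the matrix with $(i,j)$ entry $a_{ij}/a_{it}$. Then $\mathrm{per}(\mathbf{A})=\big(\prod_{i=1}^n a_{it}\big)\,\mathrm{per}(\mathbf{A}|_t)$, and the following procedure computes $\mathrm{per}(\mathbf{A})$: (i) compute the $n(n-1)$ entries $a_{ij}/a_{it}$, $j\neq t$; (ii) compute the sum-product flow on $\mathcal{T}_n(\mathbf{A}|_t)$, where one multiplication is performed for each edge not leaving the root and not entering layer $V_t$ (edges into $V_t$ have label $1$), and $|E|-|V|+1$ additions are performed; (iii) multiply $\mu(\mathrm{toor})$ by $a_{1t},\dots,a_{nt}$ one at a time. The total number of multiplications/divisions used is exactly $$n2^{n-1}-\left\lceil \tfrac n2\right\rceil\binom{n}{\lfloor n/2\rfloor}+n^2-n,$$ and the number of additions is exactly $(n-2)2^{n-1}+1$.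
   Context: $\mathrm{per}(\mathbf{A})=\sum_{\boldsymbol\sigma\in\mathbb{S}_n}\prod_{i=1}^n a_{i\sigma_i}$. The canonical permutation trellis $\mathcal{T}_n$ has layers $V_j$ = all $j$-subsets of $[n]$, an edge $(u,v)\in V_{j-1}\times V_j$ iff $u\subset v$, labeled by the $i$ with $v\setminus u=\{i\}$; $\mathcal{T}_n(\mathbf{B})$ relabels the edge from $V_{j-1}$ to $V_j$ with label $i$ by $b_{ij}$. The sum-product flow: $\mu(\mathrm{root})=1$, $\mu(v)=\sum_{(u,v)\in E}L(u,v)\mu(u)$; then $\mu(\mathrm{toor})=\mathrm{per}(\mathbf{B})$ on $\mathcal{T}_n(\mathbf{B})$. In $\mathcal{T}_n$, $|V|=2^n$, $|E|=n2^{n-1}$, and the number of edges from $V_{t-1}$ to $V_t$ is $(n-t+1)\binom{n}{t-1}$. *)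

From HB Require Import structures.
From mathcomp Require Import all_boot all_order all_algebra all_fingroup.
Set Implicit Arguments. Unset Strict Implicit. Unset Printing Implicit Defensive.
Import GRing.Theory.
Local Open Scope ring_scope.

(* Indices are 0-based: row/column i : 'I_n stands for i+1 in the paper. *)

Definition per (R : comNzRingType) (n : nat) (A : 'M[R]_n) : R :=
  \sum_(s : 'S_n) \prod_(i < n) A i (s i).

Definition mx_restrict (R : fieldType) (n : nat) (A : 'M[R]_n) (t : 'I_n) : 'M[R]_n :=
  \matrix_(i, j) (A i j / A i t).

(* The 0-based column index k as an element of 'I_n (default i if k >= n;
   never used out of range). *)
Definition col_of (n k : nat) (i : 'I_n) : 'I_n :=
  if insub k is Some j then j else i.

(* Vertices: all subsets of [n]; layer V_j = subsets of cardinality j. *)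
Definition trellis_V (n : nat) : {set {set 'I_n}} := setT.
Definition trellis_E (n : nat) : {set {set 'I_n} * {set 'I_n}} :=
  [set e : {set 'I_n} * {set 'I_n} | (e.1 \subset e.2) && (#|e.2| == #|e.1|.+1)].
Definition root (n : nat) : {set 'I_n} := set0.
Definition toor (n : nat) : {set 'I_n} := setT.

(* Sum-product flow on T_n(B): mu(root)=1,
   mu(v) = sum over in-edges (v\{i}, v), i in v, of label * mu(v\{i}),
   where the edge from V_{j-1} to V_j with label i carries b_{ij}
   (0-based column #|v|-1).  mu_aux k v is mu(v) for #|v| = k. *)
Fixpoint flow_aux (R : comNzRingType) (n : nat) (B : 'M[R]_n) (k : nat)
    (v : {set 'I_n}) : R :=
  match k with
  | 0 => 1
  | k'.+1 => \sum_(i in v) B i (col_of k' i) * flow_aux B k' (v :\ i)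
  end.
Definition flow (R : comNzRingType) (n : nat) (B : 'M[R]_n) (v : {set 'I_n}) : R :=
  flow_aux B #|v| v.

(* t is the 0-based column index (paper's t = floor(n/2)+1 is val t + 1);
   layer V_t of the paper is the set of v with #|v| = val t + 1. *)

Definition step1 (R : fieldType) (n : nat) (A : 'M[R]_n) (t : 'I_n) : 'M[R]_n :=
  \matrix_(i, j) (if j == t then 1 else A i j / A i t).

(* Step (ii): flow on T_n(C) where edges leaving the root contribute their label
   (mu(root) = 1, no multiplication) and edges entering layer V_t contribute
   mu(u) (label 1, no multiplication); other edges contribute label * mu(u). *)
Fixpoint step2_aux (R : comNzRingType) (n : nat) (C : 'M[R]_n) (t : 'I_n)
    (k : nat) (v : {set 'I_n}) : R :=
  match k with
  | 0 => 1
  | k'.+1 =>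
      \sum_(i in v)
        (if k' == 0%N then C i (col_of k' i)
         else if k'.+1 == (val t).+1 then step2_aux C t k' (v :\ i)
         else C i (col_of k' i) * step2_aux C t k' (v :\ i))
  end.

Definition procedure_value (R : fieldType) (n : nat) (A : 'M[R]_n) (t : 'I_n) : R :=
  foldl (fun x i => x * A i t) (step2_aux (step1 A t) t n (toor n)) (enum 'I_n).

(* multiplications/divisions: n(n-1) divisions in step (i), one multiplication
   per edge not leaving the root and not entering V_t in step (ii),
   n multiplications in step (iii). *)
Definition procedure_mults (n : nat) (t : 'I_n) : nat :=
  (#|[set ij : 'I_n * 'I_n | ij.2 != t]|
   + #|[set e in trellis_E n | (e.1 != root n) && (#|e.2| != (val t).+1)]|
   + n)%N.

(* additions: summing the d in-edge contributions at a non-root vertex takes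
   d - 1 additions (this totals |E| - |V| + 1). *)
Definition procedure_adds (n : nat) : nat :=
  (\sum_(v in trellis_V n | v != root n)
     (#|[set e in trellis_E n | e.2 == v]| - 1))%N.

From Pilot Require Import Defs.
From HB Require Import structures.
From mathcomp Require Import all_boot all_order all_algebra all_fingroup.
From mathcomp Require Import zify.
Import GRing.Theory.
Set Implicit Arguments. Unset Strict Implicit. Unset Printing Implicit Defensive.

(* Dividing row i by a_it gives per A = (prod_i a_it) per (A|_t),
   since per is multilinear in the rows.  The flow at a vertex v of layer k
   is the sum, over all bijections from the first k columns onto v, of the
   products of the chosen entries (induction on k, splitting on the row used
   by column k); at toor this is per B.  The procedure only skips
   multiplications by mu(root) = 1 and by the labels 1 of column t, so it
   computes mu(toor) on T_n(A|_t), and step (iii) multiplies back by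
   prod_i a_it.

   Edges into a vertex v correspond to the elements of v, so the
   in-degree of v is |v|; summing over all subsets gives |E| = n 2^(n-1), and
   over layer k gives k C(n,k).  The skipped multiplications are the edges
   into layers 1 and t+1, the additions are sum_(v <> root) (|v| - 1).  The
   binomial identity (t+1) C(n,t+1) = ceil(n/2) C(n,floor(n/2)) for
   t = floor(n/2) finishes the arithmetic. *)

Section TrellisCounts.
Variable n : nat.
Local Notation I := ('I_n).

Lemma trellis_EP (e : {set I} * {set I}) :
  (e \in trellis_E n) = [exists i, (i \in e.2) && (e.1 == e.2 :\ i)].
Proof.
rewrite inE; apply/andP/existsP.
- case=> sub /eqP hc.
  have : e.1 \proper e.2 by rewrite properEcard sub hc ltnS leqnn.
  case/properP=> _ [x xin xnot]; exists x; rewrite xin /= eqEcard.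
  apply/andP; split.
    apply/subsetP=> y yin; rewrite !inE (subsetP sub) // andbT.
    by apply: contraNneq xnot => <-.
  by move: hc; rewrite (cardsD1 x e.2) xin add1n => -[->].
- case=> i /andP [iin /eqP ->]; split; first exact: subD1set.
  by rewrite (cardsD1 i e.2) iin.
Qed.

Definition edge_of (p : {set I} * I) : {set I} * {set I} := (p.1 :\ p.2, p.1).

Lemma card_edges (Q : pred ({set I} * {set I})) :
  #|[set e in trellis_E n | Q e]| =
  #|[set p : {set I} * I | (p.2 \in p.1) && Q (edge_of p)]|.
Proof.
rewrite -(card_in_imset (f := edge_of)).
  apply: eq_card => e; rewrite in_set trellis_EP; apply/andP/imsetP.
  - case=> /existsP [i /andP [iin /eqP e1]] Qe; exists (e.2, i).
      by rewrite inE /= iin; move: Qe; case: e e1 iin => a b /= ->.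
    by case: e e1 {Qe iin} => a b /= ->.
  - case=> p; rewrite inE => /andP [pin Qp] ->; split => //.
    by apply/existsP; exists p.2; rewrite /= pin eqxx.
move=> [v i] [w j]; rewrite !inE /= => /andP [iv _] /andP [jw _] [e1 e2].
subst w; apply/eqP; rewrite xpair_eqE eqxx /=; apply/negPn/negP => ij.
have : i \in v :\ j by rewrite !inE iv ij.
by rewrite -e1 !inE eqxx.
Qed.

Lemma card_edges_by_head (P : pred {set I}) :
  #|[set e in trellis_E n | P e.2]| = \sum_(v | P v) #|v|.
Proof.
rewrite card_edges cardsE -sum1_card.
rewrite (eq_bigl (fun p : {set I} * I => P p.1 && (p.2 \in p.1))); last first.
  by move=> p /=; rewrite unfold_in /= andbC.
rewrite -(pair_big_dep P (fun v i => i \in v) (fun _ _ => 1%N)).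
by apply: eq_bigr => v _; rewrite sum1_card.
Qed.

Lemma in_degree (v : {set I}) : #|[set e in trellis_E n | e.2 == v]| = #|v|.
Proof. by rewrite (card_edges_by_head (pred1 v)) big_pred1_eq. Qed.

Lemma card_subsets : #|{set I}| = 2 ^ n.
Proof. by rewrite -cardsT -powersetT card_powerset cardsT card_ord. Qed.

(* sum_(v subset [n]) |v| = n 2^(n-1), pairing each v with its complement. *)
Lemma sum_card_subsets : (0 < n)%N -> \sum_(v : {set I}) #|v| = n * 2 ^ n.-1.
Proof.
move=> n_gt0; apply/eqP; rewrite -(eqn_pmul2r (isT : 0 < 2)%N).
rewrite -mulnA -expnSr prednK // muln2 -addnn.
rewrite {2}(reindex_inj (@setC_inj _)) /= -big_split /=.
rewrite (eq_bigr (fun _ => n)); last by move=> v _; rewrite cardsC card_ord.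
by rewrite sum_nat_const card_subsets mulnC.
Qed.

Lemma sum_card_layer k : \sum_(v : {set I} | #|v| == k) #|v| = k * 'C(n, k).
Proof.
rewrite (eq_bigr (fun _ => k)); last by move=> v /eqP.
have := card_draws I k; rewrite card_ord => <-.
by rewrite sum_nat_const mulnC; congr (_ * _)%N; apply: eq_card => v; rewrite inE.
Qed.

Lemma procedure_adds_eq :
  (0 < n)%N -> procedure_adds n + (2 ^ n - 1) = n * 2 ^ n.-1.
Proof.
move=> n_gt0; rewrite /procedure_adds -sum_card_subsets //.
rewrite [RHS](bigD1 set0) //= cards0 add0n.
rewrite (eq_bigl (fun v : {set I} => v != set0)); last first.
  by move=> v; rewrite /trellis_V inE.
rewrite (eq_bigr (fun v : {set I} => #|v| - 1)%N); last first.
  by move=> v _; rewrite in_degree.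
have -> : (2 ^ n - 1 = \sum_(v : {set I} | v != set0) 1)%N.
  rewrite sum1_card -card_subsets [X in (X - 1)%N](cardD1 set0) inE add1n subn1 /=.
  by apply: eq_card => v; rewrite !inE andbT.
rewrite -big_split /=; apply: eq_bigr => v v_neq0.
by rewrite subnK // lt0n cards_eq0.
Qed.

(* The multiplications of step (ii) are the edges not entering layers 1 and
   t+1 (an edge leaves the root iff it enters layer 1); adding back the n
   edges into layer 1 and the (t+1) C(n,t+1) edges into layer t+1 gives |E|. *)
Lemma flow_mults_eq (t : nat) : (0 < t)%N -> (0 < n)%N ->
  #|[set e in trellis_E n | (e.1 != Defs.root n) && (#|e.2| != t.+1)]|
    + n + t.+1 * 'C(n, t.+1) = n * 2 ^ n.-1.
Proof.
move=> t_gt0 n_gt0.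
pose P (v : {set I}) := (#|v| != 1%N) && (#|v| != t.+1).
have -> : #|[set e in trellis_E n | (e.1 != Defs.root n) && (#|e.2| != t.+1)]| =
          #|[set e in trellis_E n | P e.2]|.
  apply: eq_card => e; rewrite 2!in_set; case eE: (e \in trellis_E n) => //=.
  move: eE; rewrite trellis_EP => /existsP [i /andP [iv /eqP ->]].
  by rewrite /P /Defs.root (cardsD1 i e.2) iv add1n !eqSS cards_eq0.
rewrite card_edges_by_head -sum_card_subsets //.
rewrite [RHS](bigID (fun v : {set I} => #|v| == 1%N)) /= sum_card_layer mul1n bin1.
rewrite [X in (_ = _ + X)%N](bigID (fun v : {set I} => #|v| == t.+1)) /=.
rewrite [X in (_ = _ + (X + _))%N](eq_bigl (fun v : {set I} => #|v| == t.+1)).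
  by rewrite sum_card_layer addnAC addnC [X in _ + X]addnC.
by move=> v; case: (#|v| =P t.+1) => [->|_]; rewrite ?andbF ?andbT // eqSS -lt0n.
Qed.

End TrellisCounts.

Local Open Scope ring_scope.

Section FlowIsPermanent.
Variable n : nat.
Local Notation I := ('I_n).

Lemma col_of_ord (j i : I) : col_of (val j) i = j.
Proof. by rewrite /col_of valK. Qed.

Definition first_cols (k : nat) : {set I} := [set j : I | (j < k)%N].

Lemma first_cols0 : first_cols 0 = set0.
Proof. by apply/setP => j; rewrite !inE. Qed.

Lemma first_colsS k (lt_kn : (k < n)%N) :
  first_cols k.+1 = Ordinal lt_kn |: first_cols k.
Proof. by apply/setP => j; rewrite !inE ltnS leq_eqVlt -val_eqE. Qed.

Lemma card_first_cols k : (k <= n)%N -> #|first_cols k| = k.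
Proof.
elim: k => [|k IHk] le_kn; first by rewrite first_cols0 cards0.
by rewrite (first_colsS le_kn) cardsU1 IHk ?(ltnW le_kn) // inE /= ltnn add1n.
Qed.

(* The assignments of the first k columns onto the row set v: maps g,
   column j |-> row g j, that fix the columns >= k and send the first k
   columns onto v (bijectively when |v| = k). *)
Definition assignments (k : nat) (v : {set I}) : {set {ffun I -> I}} :=
  [set g : {ffun I -> I} |
    [forall j : I, (k <= j)%N ==> (g j == j)] && (g @: first_cols k == v)].

Definition ffun_set (g : {ffun I -> I}) (c x : I) : {ffun I -> I} :=
  [ffun j => if j == c then x else g j].

Lemma ffun_setE g c x j : ffun_set g c x j = if j == c then x else g j.
Proof. by rewrite ffunE. Qed.

(* An assignment of the first k+1 columns onto v sending column k to row i
   is exactly an assignment of the first k columns onto v \ {i}, extended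
   by k |-> i. *)
Lemma assignments_step k (lt_kn : (k < n)%N) (v : {set I}) i g :
  i \in v -> #|v| = k.+1 ->
  let c := Ordinal lt_kn in
  (ffun_set g c c \in assignments k (v :\ i))
    && (ffun_set (ffun_set g c c) c i == g)
  = (g \in assignments k.+1 v) && (g c == i).
Proof.
move=> iv card_v c.
have -> : (ffun_set (ffun_set g c c) c i == g) = (g c == i).
  apply/eqP/eqP => [<-|gc]; first by rewrite ffun_setE eqxx.
  by apply/ffunP => j; rewrite !ffun_setE; case: eqP => // ->.
case: eqP => gc; last by rewrite !andbF.
rewrite !andbT !inE; congr (_ && _).
  apply/forallP/forallP => fixed j; have := fixed j; rewrite ffun_setE.
    case: (j =P c) => [-> _|jc h]; first by rewrite /= ltnn.
    by apply/implyP => kj; exact: (implyP h (ltnW kj)).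
  case: (j =P c) => [-> _|jc h]; first by rewrite eqxx implybT.
  apply/implyP => kj; apply: (implyP h); rewrite ltn_neqAle kj andbT.
  by apply/eqP => kj2; apply: jc; apply: val_inj; rewrite /= -kj2.
have -> : [set ffun_set g c c x | x in first_cols k] = [set g x | x in first_cols k].
  apply: eq_in_imset => j; rewrite inE ffun_setE => jk.
  by case: eqP => // jc; move: jk; rewrite jc /= ltnn.
rewrite (first_colsS lt_kn) imsetU1 gc.
have card_img : (#|[set g x | x in first_cols k]| <= k)%N.
  by apply: leq_trans (leq_imset_card _ _) _; rewrite card_first_cols // ltnW.
apply/eqP/eqP => [->|img_v]; first by rewrite setD1K.
have i_img : i \notin [set g x | x in first_cols k].
  apply/negP => i_img; move: img_v; rewrite (setUidPr _) ?sub1set // => img_v.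
  by move: card_img; rewrite img_v card_v ltnn.
by rewrite -img_v setU1K.
Qed.

Variable R : comNzRingType.
Variable B : 'M[R]_n.

Lemma flow_assignments k (v : {set I}) : (k <= n)%N -> #|v| = k ->
  flow_aux B k v = \sum_(g in assignments k v) \prod_(j in first_cols k) B (g j) j.
Proof.
elim: k v => [|k IHk] v le_kn card_v.
  have -> : v = set0 by apply: cards0_eq.
  have -> : assignments 0 set0 = [set [ffun j => j]].
    apply/setP => g; rewrite !inE first_cols0 imset0 eqxx andbT.
    apply/forallP/eqP => [fixed|->]; last by move=> j; rewrite ffunE eqxx.
    by apply/ffunP => j; rewrite ffunE; apply/eqP; exact: fixed j.
  by rewrite big_set1 first_cols0 big_set0.
set c : I := Ordinal le_kn.
rewrite /= (eq_bigr (fun i => B i c *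
    \sum_(h in assignments k (v :\ i)) \prod_(j in first_cols k) B (h j) j)); last first.
  move=> i iv; rewrite (col_of_ord c) IHk ?(ltnW le_kn) //.
  by move: card_v; rewrite (cardsD1 i v) iv add1n => -[].
rewrite (partition_big (fun g : {ffun I -> I} => g c) (mem v)) /=; last first.
  move=> g; rewrite inE => /andP [_ /eqP <-]; apply/imsetP; exists c => //.
  by rewrite inE /= ltnSn.
apply: eq_bigr => i iv; rewrite mulr_sumr.
rewrite (reindex_onto (fun g => ffun_set g c c) (fun h => ffun_set h c i)); last first.
  move=> h; rewrite inE => /andP [/forallP fixed _]; apply/ffunP => j.
  rewrite !ffun_setE; case: eqP => // ->.
  by apply/esym/eqP; have := fixed c; rewrite /= leqnn.
apply: eq_big => g; first exact: assignments_step.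
case/andP=> _ /eqP gc.
rewrite (first_colsS le_kn) big_setU1 /=; last by rewrite inE /= ltnn.
have -> : g c = i by rewrite -gc ffun_setE eqxx.
congr (_ * _); apply: eq_bigr => j; rewrite inE ffun_setE => jk.
by case: eqP => // jc; move: jk; rewrite jc /= ltnn.
Qed.

(* At toor the assignments are the permutations: mu(toor) = per B. *)
Lemma flow_toor : flow B (toor n) = per B.
Proof.
rewrite /flow /toor cardsT card_ord flow_assignments // ?cardsT ?card_ord //.
have all_cols : first_cols n = setT by apply/setP => j; rewrite !inE ltn_ord.
rewrite all_cols /per (reindex_inj invg_inj) /=.
rewrite (eq_bigr (fun s : 'S_n => \prod_j B (s j) j)); last first.
  move=> s _; rewrite (reindex_inj (@perm_inj _ s)) /=.
  by apply: eq_bigr => j _; rewrite permK.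
symmetry.
rewrite (reindex_onto (fun s : 'S_n => val s) (fun g => insubd (1%g : 'S_n) g)); last first.
  move=> g; rewrite inE => /andP [_ /eqP g_onto]; rewrite val_insubd.
  suff -> : injectiveb g by [].
  have /imset_injP g_inj : #|[set g x | x in first_cols n]| == #|first_cols n|.
    by rewrite g_onto all_cols.
  by apply/injectiveP => x y; apply: g_inj; rewrite all_cols inE.
apply: eq_big => s; last first.
  move=> _; apply: eq_big => j; first by rewrite in_setT.
  by rewrite -[val s]/(pval s) pvalE.
have -> : insubd (1%g : 'S_n) (val s) = s.
  by apply: val_inj; rewrite val_insubd (valP s).
rewrite eqxx andbT inE all_cols; symmetry; apply/andP; split.
  by apply/forallP => j; rewrite leqNgt ltn_ord.
rewrite eqEcard subsetT /= cardsT card_imset ?cardsT //.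
by move=> x y; rewrite pvalE; exact: perm_inj.
Qed.

End FlowIsPermanent.

Lemma per_scale_rows (R : comNzRingType) (n : nat) (d : 'I_n -> R) (B : 'M[R]_n) :
  per (\matrix_(i, j) (d i * B i j)) = (\prod_i d i) * per B.
Proof.
rewrite /per mulr_sumr; apply: eq_bigr => s _.
by rewrite -big_split /=; apply: eq_bigr => i _; rewrite mxE.
Qed.

Lemma step2_flow (R : comNzRingType) (n : nat) (C : 'M[R]_n) (t : 'I_n) :
  (forall i, C i t = 1) -> forall k v, step2_aux C t k v = flow_aux C k v.
Proof.
move=> col_t_one; elim=> [|k IHk] v //=; apply: eq_bigr => i _.
case: eqP => [-> /=|_]; first by rewrite mulr1.
case: eqP => [[kt]|_]; last by rewrite IHk.
by rewrite kt (col_of_ord t) col_t_one mul1r -kt IHk.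
Qed.

Lemma foldl_mulr (R : comNzRingType) (T : Type) (f : T -> R) (y : R) (s : seq T) :
  foldl (fun x i => x * f i) y s = y * \prod_(i <- s) f i.
Proof.
elim: s y => [|a s IHs] y /=; first by rewrite big_nil mulr1.
by rewrite IHs big_cons mulrA.
Qed.

(* The edges skipped because they enter layer V_t number
   (floor(n/2)+1) C(n, floor(n/2)+1) = ceil(n/2) C(n, floor(n/2)). *)
Lemma layer_after_middle (n : nat) :
  ((n./2).+1 * 'C(n, (n./2).+1) = uphalf n * 'C(n, n./2))%N.
Proof.
rewrite -mul_bin_diag mul_bin_down; congr (_ * _)%N.
by have := odd_double_half n; rewrite uphalf_half -addnn; lia.
Qed.

Lemma procedure_mults_eq (n : nat) (t : 'I_n) : (2 <= n)%N -> val t = n./2 ->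
  (procedure_mults t + uphalf n * 'C(n, n./2) + n = n * 2 ^ n.-1 + n ^ 2)%N.
Proof.
move=> n_ge2 t_mid.
have divisions : #|[set ij : 'I_n * 'I_n | ij.2 != t]| = (n * n.-1)%N.
  have -> : [set ij : 'I_n * 'I_n | ij.2 != t] = setX [set: 'I_n] [set~ t].
    by apply/setP => -[i j]; rewrite !inE.
  by rewrite cardsX cardsT cardsC1 card_ord.
have n_gt0 : (0 < n)%N by apply: leq_trans n_ge2.
have t_gt0 : (0 < val t)%N by rewrite t_mid; exact: (half_leq n_ge2).
have flow_mults := flow_mults_eq t_gt0 n_gt0.
rewrite t_mid layer_after_middle -t_mid in flow_mults.
rewrite /procedure_mults divisions -flow_mults t_mid -mulnn.
have : n = (n.-1).+1 by rewrite prednK.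
by move: (n.-1) => m ->; lia.
Qed.

Unset Implicit Arguments.

Theorem theorem4 (R : fieldType) (n : nat) (A : 'M[R]_n) (t : 'I_n) :
  (2 <= n)%N ->
  val t = n./2 ->
  (forall i : 'I_n, A i t != 0) ->
  [/\ per A = (\prod_(i < n) A i t) * per (mx_restrict A t),
      procedure_value A t = per A,
      (procedure_mults t)%:Z =
        (n * 2 ^ n.-1)%:Z - (uphalf n * 'C(n, n./2))%:Z + (n ^ 2)%:Z - n%:Z
    & procedure_adds n = ((n - 2) * 2 ^ n.-1 + 1)%N].
Proof.
move=> n_ge2 t_mid A_t_neq0.
have n_gt0 : (0 < n)%N by apply: leq_trans n_ge2.
have per_factor : per A = (\prod_(i < n) A i t) * per (mx_restrict A t).
  rewrite -per_scale_rows; congr per; apply/matrixP => i j.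
  by rewrite !mxE mulrCA divff // mulr1.
have step1_restrict : step1 A t = mx_restrict A t.
  by apply/matrixP => i j; rewrite !mxE; case: eqP => // ->; rewrite divff.
split => //.
- rewrite /procedure_value foldl_mulr big_enum step1_restrict step2_flow; last first.
    by move=> i; rewrite mxE divff.
  have := flow_toor (mx_restrict A t); rewrite /flow /toor cardsT card_ord => ->.
  by rewrite per_factor mulrC.
- by have := procedure_mults_eq n_ge2 t_mid; lia.
- have := procedure_adds_eq n_gt0.
  have -> : (2 ^ n = 2 * 2 ^ n.-1)%N by rewrite -expnS prednK.
  have : (2 * 2 ^ n.-1 <= n * 2 ^ n.-1)%N by rewrite leq_mul2r n_ge2 orbT.
  have : (0 < 2 ^ n.-1)%N by rewrite expn_gt0.
  by move: (2 ^ n.-1)%N => X; nia.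
Qed.
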